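(* Let $m\ge1$ be an integer, $\Gamma_1,\Gamma_2$ co-prime integers with $1<\Gamma_1<\Gamma_2$, $m_1=m\Gamma_1$, $m_2=m\Gamma_2$, let $1\le j\le K+1$, and let $\tau$ be a real number with $\tau<m\sigma_j/4$. For every integer $N$ with $0\le N<\min\big(m_2(1+\ddot n_{2,j}),\,m_1(1+\ddot n_{1,j})\big)$ and every pair of erroneous remainders $\tilde r_1,\tilde r_2$ of $N$ with $|\Delta r_i|\le\tau$ for $i=1,2$, Algorithm 2 (with index $j$) returns $\hat n_1=n_1$ and $\hat n_2=n_2$.
   Context: $|a|_b$ is the remainder of the integer $a$ modulo the positive integer $b$; $[x]=\lfloor x+1/2\rfloor$. For an integer $N\ge0$: folding integers $n_i=\lfloor N/m_i\rfloor$, remainders $r_i=N-n_im_i$; erroneous remainders are integers $\tilde r_i$ with $0\le\tilde r_i<m_i$, errors $\Delta r_i=\tilde r_i-r_i$. Euclidean sequence: $\sigma_{-1}=\Gamma_2$, $\sigma_0=\Gamma_1$, $\sigma_i=|\sigma_{i-2}|_{\sigma_{i-1}}$ for $i\ge1$; $K\ge0$ is the index with $\sigma_K>1$, $\sigma_{K+1}=1$. For $1\le n<\Gamma_1$, $S_{2,n}=\{|t\Gamma_2|_{\Gamma_1}:0\le t\le n\}$, $d_{2,n}$ = minimum distance between distinct elements of $S_{2,n}$; for $1\le n<\Gamma_2$, $S_{1,n}=\{|t\Gamma_1|_{\Gamma_2}:0\le t\le n\}$, $d_{1,n}$ likewise. $\ddot n_{2,j}=\max\{n:1\le n<\Gamma_1,\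 d_{2,n}\ge\sigma_j\}$, $\ddot n_{1,j}=\max\{n:1\le n<\Gamma_2,\ d_{1,n}\ge\sigma_j\}$. $\bar\Gamma_{21}$ is the inverse of $\Gamma_2$ modulo $\Gamma_1$, $\bar\Gamma_{12}$ the inverse of $\Gamma_1$ modulo $\Gamma_2$. Algorithm 2 (index $j$, input $\tilde r_1,\tilde r_2$): compute $\mathbf q_{21}=(\tilde r_1-\tilde r_2)/m$. (i) If $\mathbf q_{21}\ge\sigma_j/2$: if some $x\in S_{2,\ddot n_{2,j}}$ satisfies $-\sigma_j/2\le\mathbf q_{21}-x<\sigma_j/2$, let $s_2=x$; otherwise let $s_2$ be an element of $S_{2,\ddot n_{2,j}}$ at minimum distance from $\mathbf q_{21}$. Let $\hat n_2\in[0,\Gamma_1)$ with $\hat n_2\equiv s_2\bar\Gamma_{21}\pmod{\Gamma_1}$ and $\hat n_1=[(\hat n_2m_2+\tilde r_2-\tilde r_1)/m_1]$. (ii) If $\mathbf q_{21}<-\sigma_j/2$: if some $y\in S_{1,\ddot n_{1,j}}$ satisfies $-\sigma_j/2\le\mathbf q_{21}+y<\sigma_j/2$, let $s_1=y$; otherwise let $s_1$ be an element of $S_{1,\ddot n_{1,j}}$ at minimum distance from $-\mathbf q_{21}$. Let $\hat n_1\in[0,\Gamma_2)$ with $\hat n_1\equiv s_1\bar\Gamma_{12}\pmod{\Gamma_2}$ and $\hat n_2=[(\hat n_1m_1+\tilde r_1-\tilde r_2)/m_2]$. (iii) If $-\sigma_j/2\le\mathbf q_{21}<\sigma_j/2$: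 $\hat n_1=\hat n_2=0$. *)

From HB Require Import structures.
From mathcomp Require Import all_boot all_order all_algebra.
Set Implicit Arguments. Unset Strict Implicit. Unset Printing Implicit Defensive.
Import Order.TTheory GRing.Theory Num.Theory.

(* Euclidean sequence: esq G1 G2 i = (sigma_{i-1}, sigma_i), with
   sigma_{-1} = G2, sigma_0 = G1, sigma_i = sigma_{i-2} mod sigma_{i-1}. *)
Fixpoint esq (G1 G2 : nat) (i : nat) : nat * nat :=
  match i with
  | 0 => (G2, G1)
  | i'.+1 => let p := esq G1 G2 i' in (p.2, p.1 %% p.2)
  end.

Definition sigma (G1 G2 i : nat) : nat := (esq G1 G2 i).2.

Definition Sset (a b n : nat) : seq nat := [seq (t * a) %% b | t <- iota 0 n.+1].

Definition distn (x y : nat) : nat := (x - y) + (y - x).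

(* minimum distance between distinct elements of s (0 if there are none). *)
Definition mindist (s : seq nat) : nat :=
  let ds := [seq distn x y | x <- s, y <- [seq z <- s | z != x]] in
  foldr minn (head 0 ds) ds.

Definition d2 (G1 G2 n : nat) : nat := mindist (Sset G2 G1 n).
Definition d1 (G1 G2 n : nat) : nat := mindist (Sset G1 G2 n).

Definition nddot2 (G1 G2 j : nat) : nat :=
  \max_(1 <= n < G1 | sigma G1 G2 j <= d2 G1 G2 n) n.
Definition nddot1 (G1 G2 j : nat) : nat :=
  \max_(1 <= n < G2 | sigma G1 G2 j <= d1 G1 G2 n) n.

Definition invmod (a b : nat) : nat := \max_(i < b | (a * i) %% b == 1 %% b) i.

Local Open Scope ring_scope.

Definition rnd {R : archiRealFieldType} (x : R) : int := Num.floor (x + 2^-1).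

(* Algorithm 2 with index j, as a relation between the inputs (erroneous
   remainders rt1 rt2) and its possible outputs (nh1, nh2).  The relation
   captures the (possibly non-deterministic, in case of ties) choices. *)
Definition alg2 (R : archiRealFieldType) (m G1 G2 j : nat) (rt1 rt2 : nat)
    (nh1 nh2 : int) : Prop :=
  let m1 := (m * G1)%N in
  let m2 := (m * G2)%N in
  let sj : R := (sigma G1 G2 j)%:R in
  let q : R := ((rt1%:Z - rt2%:Z)%:~R) / m%:R in
  let S2 := Sset G2 G1 (nddot2 G1 G2 j) in
  let S1 := Sset G1 G2 (nddot1 G1 G2 j) in
  let win (z : R) := - (sj / 2) <= z /\ z < sj / 2 in
  (sj / 2 <= q /\
   exists2 s2, s2 \in S2 &
     (win (q - s2%:R) \/
      ((~ exists2 x, x \in S2 & win (q - x%:R)) /\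
       forall y, y \in S2 -> `|q - s2%:R| <= `|q - y%:R|)) /\
     nh2 = ((s2 * invmod G2 G1) %% G1)%N%:Z /\
     nh1 = rnd ((nh2 * m2%:Z + rt2%:Z - rt1%:Z)%:~R / (m1%:R : R)))
  \/
  (q < - (sj / 2) /\
   exists2 s1, s1 \in S1 &
     (win (q + s1%:R) \/
      ((~ exists2 y, y \in S1 & win (q + y%:R)) /\
       forall y, y \in S1 -> `|- q - s1%:R| <= `|- q - y%:R|)) /\
     nh1 = ((s1 * invmod G1 G2) %% G2)%N%:Z /\
     nh2 = rnd ((nh1 * m1%:Z + rt1%:Z - rt2%:Z)%:~R / (m2%:R : R)))
  \/
  (win q /\ nh1 = 0 /\ nh2 = 0).

(* Write N = n1 m1 + r1 = n2 m2 + r2 and k = n2 G2 - n1 G1, so that m k = r1 - r2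
   and q21 = k + e with |e| = |Δr1 - Δr2| / m < sigma_j / 2.  If k > 0 then
   0 < k < G1, so k = |n2 G2|_G1; as n2 <= ddot n_{2,j}, k lies in S_{2, ddot n_{2,j}},
   whose distinct points are at least sigma_j apart by the choice of ddot n_{2,j}.
   Hence k is the only point of that set within sigma_j / 2 of q21, Algorithm 2
   takes s2 = k and recovers n2 = k inv(G2) mod G1, and then n1 by rounding, because
   the rounded quantity is n1 + (Δr2 - Δr1) / m1 with an error below 1/2.
   The case k < 0 is symmetric, and k = 0 forces n1 = n2 = 0 by coprimality, since n2 < G1. *)

From HB Require Import structures.
From mathcomp Require Import all_boot all_order all_algebra.
From mathcomp Require Import zify ring lra.
Import Order.TTheory GRing.Theory Num.Theory.

Set Implicit Arguments.
Unset Strict Implicit.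
Unset Printing Implicit Defensive.

Lemma bigmax_seq_attained (I : eqType) (r : seq I) (P : pred I) (F : I -> nat) :
  (0 < \max_(i <- r | P i) F i)%N ->
  exists2 i, (i \in r) && P i & \max_(i <- r | P i) F i = F i.
Proof.
rewrite big_seq_cond; elim/big_ind: _ => [//|x y IHx IHy|i riPi _]; last by exists i.
by case: (leqP x y).
Qed.

Lemma bigmax_iota_lt (a b : nat) (P : pred nat) :
  (0 < b)%N -> (\max_(a <= n < b | P n) n < b)%N.
Proof.
move=> b_gt0; rewrite big_seq_cond; elim/big_ind: _ => // [x y|i].
  by rewrite gtn_max => -> ->.
by rewrite mem_index_iota => /andP[/andP[]].
Qed.

Lemma invmodP (a b : nat) : (1 < b)%N -> coprime a b -> (a * invmod a b) %% b = 1%N.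
Proof.
move=> b_gt1 cop; have a_gt0 : (0 < a)%N.
  by case: a cop => // /eqP; rewrite gcd0n => b1; rewrite b1 in b_gt1.
have [u au] : exists u : 'I_b, (a * u) %% b == 1 %% b.
  case: (egcdnP b a_gt0) => km kn def _; rewrite (eqnP cop) in def.
  exists (Ordinal (ltn_pmod km (ltnW b_gt1))) => /=.
  by rewrite modnMmr mulnC def modnMDl.
rewrite /invmod (bigop.bigmax_eq_arg u) //; case: arg_maxnP => // i /eqP -> _.
exact: modn_small.
Qed.

Lemma mindist_le_distn (s : seq nat) (x y : nat) :
  x \in s -> y \in s -> x != y -> (mindist s <= distn x y)%N.
Proof.
move=> xs ys xy; rewrite /mindist.
have foldr_minn_le z (l : seq nat) d : d \in l -> (foldr minn z l <= d)%N.
  by elim: l => //= h l IH; rewrite inE geq_min => /predU1P[->|/IH->]; rewrite ?leqnn ?orbT.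
apply: foldr_minn_le; apply/allpairsPdep; exists x, y.
by rewrite mem_filter eq_sym xy.
Qed.

Lemma mem_Sset (a b n t : nat) : (t <= n)%N -> (t * a) %% b \in Sset a b n.
Proof. by move=> tn; apply: (map_f (fun t => (t * a) %% b)); rewrite mem_iota. Qed.

Lemma mindist_Sset_le (a b n k : nat) :
  k \in Sset a b n -> k != 0%N -> (mindist (Sset a b n) <= k)%N.
Proof.
move=> kS k0; have zS : 0%N \in Sset a b n by rewrite -(mod0n b) -(mul0n a) mem_Sset.
by rewrite (leq_trans (mindist_le_distn kS zS k0)) // /distn subn0 sub0n addn0.
Qed.

Lemma sigma_le (G1 G2 i : nat) : (0 < G1)%N -> (sigma G1 G2 i <= G1)%N.
Proof.
move=> G1_gt0; case: i => // i; rewrite /sigma.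
suff : ((esq G1 G2 i.+1).1 <= G1 /\ (esq G1 G2 i.+1).2 <= G1)%N by case.
elim: i => [|i [le1 le2]] /=; first by rewrite leqnn ltnW ?ltn_mod.
by split=> //; apply: leq_trans (leq_mod _ _) le1.
Qed.

Lemma folding_gap_mod (m A B x y rA rB : nat) : (0 < m)%N ->
  (m * (x * A) + rA = m * (y * B) + rB)%N -> (rB < m * B)%N -> (y * B <= x * A)%N ->
  (x * A = y * B + (x * A) %% B)%N.
Proof.
move=> m_gt0 eqN rB_lt le_yx.
have def_g : (x * A = y * B + (x * A - y * B))%N by rewrite subnKC.
have g_lt : (x * A - y * B < B)%N.
  have eq_g : (m * (x * A - y * B) + rA = rB)%N.
    by apply/(@addnI (m * (y * B))); rewrite addnA -mulnDr -def_g.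
  by rewrite -(ltn_pmul2l m_gt0) (leq_ltn_trans _ rB_lt) // -eq_g leq_addr.
by rewrite {2}def_g modnMDl modn_small.
Qed.

Lemma folding_residue (m A B x y rA rB s nd : nat) :
  (0 < m)%N -> (1 < B)%N -> coprime A B ->
  (m * (x * A) + rA = m * (y * B) + rB)%N -> (rB < m * B)%N -> (y * B < x * A)%N ->
  (x <= nd)%N -> nd = (\max_(1 <= n < B | s <= mindist (Sset A B n)) n)%N ->
  exists k, [/\ x * A = y * B + k, k \in Sset A B nd, k != 0,
      (k * invmod A B) %% B = x & s <= mindist (Sset A B nd)]%N.
Proof.
move=> m_gt0 B_gt1 cop eqN rB_lt lt_yx x_le ndE.
have x_gt0 : (0 < x)%N by rewrite lt0n; apply: contraTneq lt_yx => ->; rewrite mul0n.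
have nd_gt0 : (0 < nd)%N := leq_trans x_gt0 x_le.
rewrite ndE in nd_gt0.
have [i /andP[iB sep_i] nd_i] := bigmax_seq_attained nd_gt0.
rewrite -ndE /= in nd_i; rewrite mem_index_iota in iB.
have gap := folding_gap_mod m_gt0 eqN rB_lt (ltnW lt_yx).
exists ((x * A) %% B)%N; split; rewrite ?nd_i //.
- by apply: mem_Sset; rewrite -nd_i.
- by apply: contraTneq lt_yx => k0; rewrite gap k0 addn0 ltnn.
- rewrite modnMml -mulnA -modnMmr invmodP // muln1 modn_small //.
  by apply: leq_ltn_trans x_le _; rewrite nd_i; case/andP: iB.
Qed.

Lemma coprime_mul_eq0 (A B x y : nat) : coprime A B -> (x < B)%N ->
  (x * A = y * B)%N -> x = 0%N /\ y = 0%N.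
Proof.
move=> cop x_lt eqxy.
have x0 : x = 0%N.
  have : (B %| x)%N by rewrite -(@Gauss_dvdl _ _ A) 1?coprime_sym // eqxy dvdn_mull.
  by case: x x_lt {eqxy} => // x x_lt /(dvdn_leq (ltn0Sn x)); rewrite leqNgt x_lt.
split=> //; apply/eqP; move: eqxy; rewrite x0 mul0n => /esym/eqP.
by rewrite muln_eq0 => /orP[] // /eqP B0; rewrite B0 in x_lt.
Qed.

Local Open Scope ring_scope.

Lemma rnd_div_eq (R : archiRealFieldType) (n : int) (y b : R) :
  0 < b -> `|y - n%:~R * b| < b / 2 -> rnd (y / b) = n.
Proof.
move=> b_gt0 y_near; rewrite /rnd; apply: floor_def.
have -> : y / b = n%:~R + (y - n%:~R * b) / b by field; rewrite gt_eqF.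
have : `|(y - n%:~R * b) / b| < 2^-1.
  by rewrite normrM normfV (gtr0_norm b_gt0) ltr_pdivrMr // [2^-1 * _]mulrC.
rewrite ltr_norml intrD mulr1z => /andP[lo hi]; apply/andP; split; lra.
Qed.

Lemma rnd_folding (R : archiRealFieldType) (N mA mB rtA rtB : nat) (tau : R) :
  (0 < mA)%N -> tau < mA%:R / 4 ->
  (`|rtA%:Z - (N %% mA)%N%:Z|%:~R : R) <= tau ->
  (`|rtB%:Z - (N %% mB)%N%:Z|%:~R : R) <= tau ->
  rnd (((N %/ mB)%N%:Z * mB%:Z + rtB%:Z - rtA%:Z)%:~R / (mA%:R : R)) = (N %/ mA)%N%:Z.
Proof.
move=> mA_gt0 tau_lt devA devB; apply: rnd_div_eq; first by rewrite ltr0n.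
have -> : (N %/ mB)%N%:Z * mB%:Z + rtB%:Z - rtA%:Z = (N %/ mA)%N%:Z * mA%:Z
    + ((rtB%:Z - (N %% mB)%N%:Z) - (rtA%:Z - (N %% mA)%N%:Z)).
  by have := divn_eq N mA; have := divn_eq N mB; lia.
rewrite intrD intrM -pmulrn addrAC subrr add0r intrB.
move: devA devB; rewrite !intr_norm => devA devB.
by apply: le_lt_trans (ler_normB _ _) _; lra.
Qed.

Lemma quotient_split (R : numFieldType) (m u v rA rB rtA rtB : nat) : (0 < m)%N ->
  (m * u + rB = m * v + rA)%N ->
  ((rtA%:Z - rtB%:Z)%:~R / m%:R : R)
  = (u%:Z - v%:Z)%:~R + ((rtA%:Z - rA%:Z) - (rtB%:Z - rB%:Z))%:~R / m%:R.
Proof.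
move=> m_gt0 eqN.
have -> : rtA%:Z - rtB%:Z = m%:Z * (u%:Z - v%:Z) + ((rtA%:Z - rA%:Z) - (rtB%:Z - rB%:Z)) by lia.
rewrite !(intrD, intrM) -!pmulrn; field.
by rewrite pnatr_eq0 -lt0n.
Qed.

Lemma quotient_error_lt (R : realFieldType) (m s : nat) (a b : int) (tau : R) :
  (0 < m)%N -> (`|a|%:~R : R) <= tau -> (`|b|%:~R : R) <= tau ->
  tau < (m * s)%N%:R / 4 -> `|(a - b)%:~R / m%:R| < s%:R / 2 :> R.
Proof.
move=> m_gt0 dev_a dev_b tau_lt; have m_pos : (0 : R) < m%:R by rewrite ltr0n.
move: dev_a dev_b; rewrite !intr_norm natrM in tau_lt * => dev_a dev_b.
rewrite normrM normfV (gtr0_norm m_pos) ltr_pdivrMr // intrB.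
by apply: le_lt_trans (ler_normB _ _) _; nra.
Qed.

Lemma mindist_window_unique (R : realFieldType) (S : seq nat) (s k z : nat) (c : R) :
  k \in S -> z \in S -> (s <= mindist S)%N ->
  `|c - k%:R| < s%:R / 2 -> `|c - z%:R| <= s%:R / 2 -> z = k.
Proof.
move=> kS zS sep ck cz; case: (eqVneq z k) => // zk; exfalso.
have := leq_trans sep (mindist_le_distn zS kS zk); rewrite /distn => s_le_dist.
have : (s + z <= k)%N \/ (s + k <= z)%N by lia.
move: ck cz; rewrite ltr_norml ler_norml => /andP[ck1 ck2] /andP[cz1 cz2].
by case; rewrite -(ler_nat R) natrD; lra.
Qed.

Section Algorithm2.

Variables (R : archiRealFieldType) (m G1 G2 j rt1 rt2 : nat) (e : R).

Local Notation s := (sigma G1 G2 j).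
Local Notation q := ((rt1%:Z - rt2%:Z)%:~R / m%:R : R).
Local Notation S1 := (Sset G1 G2 (nddot1 G1 G2 j)).
Local Notation S2 := (Sset G2 G1 (nddot2 G1 G2 j)).

Hypothesis e_small : `|e| < s%:R / 2.

Let e_bounds : - (s%:R / 2) < e < s%:R / 2.
Proof. by rewrite -ltr_norml. Qed.

Let s_ge0 : (0 : R) <= s%:R.
Proof. exact: ler0n. Qed.

Lemma alg2_pos_iff (k n1 n2 : nat) (nh1 nh2 : int) :
  k \in S2 -> k != 0%N -> (s <= mindist S2)%N -> q = k%:R + e ->
  ((k * invmod G2 G1) %% G1)%N = n2 ->
  rnd ((n2%:Z * (m * G2)%N%:Z + rt2%:Z - rt1%:Z)%:~R / ((m * G1)%N%:R : R)) = n1%:Z ->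
  alg2 R m G1 G2 j rt1 rt2 nh1 nh2 <-> nh1 = n1%:Z /\ nh2 = n2%:Z.
Proof.
move=> kS k0 sep q_eq kinv rnd_n1.
have s_le_k : (s%:R : R) <= k%:R by rewrite ler_nat (leq_trans sep) ?mindist_Sset_le.
have k_near : `|k%:R + e - k%:R| < s%:R / 2 by rewrite addrAC subrr add0r.
case/andP: e_bounds => e_lo e_hi; rewrite /alg2; cbv zeta; rewrite q_eq; split.
- case=> [[_ [s2 s2S [[[w_lo w_hi]|[no_window _]] [-> ->]]]] | [[q_lt _] | [[_ q_lt] _]]].
  + have -> : s2 = k.
      by apply: (mindist_window_unique kS s2S sep k_near); rewrite ler_norml w_lo ltW.
    by rewrite kinv rnd_n1.
  + by exfalso; apply: no_window; exists k => //; split; lra.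
  + exfalso; lra.
  + exfalso; lra.
- case=> -> ->; left; split; first lra.
  by exists k => //; split; [left; split; lra | rewrite kinv rnd_n1].
Qed.

Lemma alg2_neg_iff (k n1 n2 : nat) (nh1 nh2 : int) :
  k \in S1 -> k != 0%N -> (s <= mindist S1)%N -> q = - k%:R + e ->
  ((k * invmod G1 G2) %% G2)%N = n1 ->
  rnd ((n1%:Z * (m * G1)%N%:Z + rt1%:Z - rt2%:Z)%:~R / ((m * G2)%N%:R : R)) = n2%:Z ->
  alg2 R m G1 G2 j rt1 rt2 nh1 nh2 <-> nh1 = n1%:Z /\ nh2 = n2%:Z.
Proof.
move=> kS k0 sep q_eq kinv rnd_n2.
have s_le_k : (s%:R : R) <= k%:R by rewrite ler_nat (leq_trans sep) ?mindist_Sset_le.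
have k_near : `|k%:R - e - k%:R| < s%:R / 2 by rewrite addrAC subrr add0r normrN.
case/andP: e_bounds => e_lo e_hi; rewrite /alg2; cbv zeta; rewrite q_eq; split.
- case=> [[q_ge _] | [[_ [s1 s1S [[[w_lo w_hi]|[no_window _]] [-> ->]]]] | [[q_lo _] _]]].
  + exfalso; lra.
  + have -> : s1 = k.
      apply: (mindist_window_unique kS s1S sep k_near).
      by rewrite ler_norml; apply/andP; split; lra.
    by rewrite kinv rnd_n2.
  + by exfalso; apply: no_window; exists k => //; split; lra.
  + exfalso; lra.
- case=> -> ->; right; left; split; first lra.
  by exists k => //; split; [left; split; lra | rewrite kinv rnd_n2].
Qed.

Lemma alg2_zero_iff (nh1 nh2 : int) :
  q = e -> alg2 R m G1 G2 j rt1 rt2 nh1 nh2 <-> nh1 = 0 /\ nh2 = 0.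
Proof.
move=> q_eq; case/andP: e_bounds => e_lo e_hi; rewrite /alg2; cbv zeta; rewrite q_eq.
split.
- by case=> [[e_ge _] | [[e_lt _] | [_ [-> ->]]]] //; exfalso; lra.
- by move=> nh_0; right; right; split=> //; split; lra.
Qed.

Lemma alg2_recovers (n1 n2 r1 r2 : nat) :
  (0 < m)%N -> coprime G1 G2 -> (1 < G1)%N -> (G1 < G2)%N ->
  (m * (n2 * G2) + r2 = m * (n1 * G1) + r1)%N -> (r1 < m * G1)%N -> (r2 < m * G2)%N ->
  (n2 <= nddot2 G1 G2 j)%N -> (n1 <= nddot1 G1 G2 j)%N ->
  q = ((n2 * G2)%N%:Z - (n1 * G1)%N%:Z)%:~R + e ->
  rnd ((n2%:Z * (m * G2)%N%:Z + rt2%:Z - rt1%:Z)%:~R / ((m * G1)%N%:R : R)) = n1%:Z ->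
  rnd ((n1%:Z * (m * G1)%N%:Z + rt1%:Z - rt2%:Z)%:~R / ((m * G2)%N%:R : R)) = n2%:Z ->
  (exists nh1 nh2, alg2 R m G1 G2 j rt1 rt2 nh1 nh2) /\
  (forall nh1 nh2, alg2 R m G1 G2 j rt1 rt2 nh1 nh2 -> nh1 = n1%:Z /\ nh2 = n2%:Z).
Proof.
move=> m_gt0 cop G1_gt1 G12 eqN r1_lt r2_lt n2_le n1_le q_eq rnd_n1 rnd_n2.
suff alg2E nh1 nh2 : alg2 R m G1 G2 j rt1 rt2 nh1 nh2 <-> nh1 = n1%:Z /\ nh2 = n2%:Z.
  by split=> [|nh1 nh2 /alg2E //]; exists n1%:Z, n2%:Z; apply/alg2E.
have cop21 : coprime G2 G1 by rewrite coprime_sym.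
case: (ltngtP (n1 * G1) (n2 * G2)) => cmp.
- have [k [gap kS k0 kinv sep]] :=
    folding_residue m_gt0 G1_gt1 cop21 eqN r1_lt cmp n2_le erefl.
  apply: alg2_pos_iff kS k0 sep _ kinv rnd_n1.
  by rewrite q_eq gap PoszD addrAC subrr add0r -pmulrn.
- have [k [gap kS k0 kinv sep]] := folding_residue m_gt0 (ltn_trans G1_gt1 G12) cop
    (esym eqN) r2_lt cmp n1_le erefl.
  apply: alg2_neg_iff kS k0 sep _ kinv rnd_n2.
  by rewrite q_eq gap PoszD opprD addrA subrr add0r intrN -pmulrn.
- have n2_lt : (n2 < G1)%N.
    apply: leq_ltn_trans n2_le _; apply: bigmax_iota_lt; exact: ltnW G1_gt1.
  have [-> ->] := coprime_mul_eq0 cop21 n2_lt (esym cmp).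
  by apply: alg2_zero_iff; rewrite q_eq -cmp subrr mulr0z add0r.
Qed.

End Algorithm2.

Theorem corollary1 (R : archiRealFieldType) (m G1 G2 K j : nat) (tau : R)
  (Hm : (1 <= m)%N) (Hcop : coprime G1 G2) (H1 : (1 < G1)%N) (H12 : (G1 < G2)%N)
  (HK1 : (1 < sigma G1 G2 K)%N) (HK2 : sigma G1 G2 K.+1 = 1%N)
  (Hj : (1 <= j <= K.+1)%N)
  (Htau : tau < (m * sigma G1 G2 j)%N%:R / 4)
  (N : nat)
  (HN : (N < minn ((m * G2) * (1 + nddot2 G1 G2 j)) ((m * G1) * (1 + nddot1 G1 G2 j)))%N)
  (rt1 rt2 : nat) (Hr1 : (rt1 < m * G1)%N) (Hr2 : (rt2 < m * G2)%N)
  (Hd1 : (`|rt1%:Z - (N %% (m * G1))%N%:Z|%:~R : R) <= tau)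
  (Hd2 : (`|rt2%:Z - (N %% (m * G2))%N%:Z|%:~R : R) <= tau) :
  (exists nh1 nh2, alg2 R m G1 G2 j rt1 rt2 nh1 nh2) /\
  (forall nh1 nh2, alg2 R m G1 G2 j rt1 rt2 nh1 nh2 ->
     nh1 = (N %/ (m * G1))%N%:Z /\ nh2 = (N %/ (m * G2))%N%:Z).
Proof.
have G1_gt0 : (0 < G1)%N by apply: ltnW.
have mG1_gt0 : (0 < m * G1)%N by rewrite muln_gt0 Hm.
have mG2_gt0 : (0 < m * G2)%N by rewrite muln_gt0 Hm (ltn_trans G1_gt0).
have divn_le d M : (0 < d)%N -> (N < d * (1 + M))%N -> (N %/ d <= M)%N.
  by move=> d_gt0 N_lt; rewrite -ltnS -add1n ltn_divLR // mulnC.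
move: HN; rewrite leq_min => /andP[/(divn_le _ _ mG2_gt0) n2_le /(divn_le _ _ mG1_gt0) n1_le].
have eqN : (m * (N %/ (m * G2) * G2) + N %% (m * G2)
            = m * (N %/ (m * G1) * G1) + N %% (m * G1))%N.
  by rewrite (mulnCA m _ G2) (mulnCA m _ G1) -divn_eq -divn_eq.
have ms_le : (m * sigma G1 G2 j <= m * G1 <= m * G2)%N.
  by rewrite !leq_mul2l sigma_le // (ltnW H12) !orbT.
have [tau_lt1 tau_lt2] : tau < (m * G1)%N%:R / 4 /\ tau < (m * G2)%N%:R / 4.
  by case/andP: ms_le; rewrite -!(ler_nat R) => ? ?; split; lra.
apply: (alg2_recovers (quotient_error_lt Hm Hd1 Hd2 Htau) Hm Hcop H1 H12 eqN
          (ltn_pmod _ mG1_gt0) (ltn_pmod _ mG2_gt0) n2_le n1_le).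
- exact: quotient_split.
- exact: (rnd_folding mG1_gt0 tau_lt1 Hd1 Hd2).
- exact: (rnd_folding mG2_gt0 tau_lt2 Hd2 Hd1).
Qed.
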